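(* Let $T=\{t_1,\ldots,t_N\}$ be documents, each containing at most $L$ distinct words from a dictionary $\{w_1,\ldots,w_D\}$ ($D\ge2$). For a word $w$ let $\#(w)$ be the number of documents containing $w$. Fix $\epsilon\in(0,1]$ and $p=2\log D$. Consider the mapper that, for every document $t$ and every unordered pair of distinct words $(w_1,w_2)$ in $t$, independently emits $((w_1,w_2)\to1)$ with probability $\min\!\left(1,\frac{p}{\epsilon}\frac{1}{\min(\#(w_1),\#(w_2))}\right)$ (OverlapSampleEmit). Then the expected total number of emitted pairs (shuffle size) is $O(DL\log(D)/\epsilon)$, independently of $N$.
   Context: This sampling scheme is used to estimate the overlap similarity $\frac{\#(x,y)}{\min(\#(x),\#(y))}$, where $\#(x,y)$ is the number of documents containing both $x$ and $y$. $\log$ denotes the natural logarithm. *)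

From mathcomp Require Import all_boot all_order all_algebra.
From mathcomp Require Import reals exp.
Set Implicit Arguments. Unset Strict Implicit. Unset Printing Implicit Defensive.
Import Order.TTheory GRing.Theory Num.Theory.
Local Open Scope ring_scope.

(* Documents t_1..t_N are modelled as subsets of the dictionary 'I_D
   (the set of distinct words occurring in the document). *)

Definition doc_count (N D : nat) (T : 'I_N -> {set 'I_D}) (w : 'I_D) : nat :=
  #|[set i : 'I_N | w \in T i]|.

(* Candidate emission slots: (document i, ordered pair (w1,w2)).  A slot is an
   actual (unordered, distinct) word pair of document i iff w1 < w2 and both
   words occur in T i. *)
Definition slot (N D : nat) : finType := ('I_N * ('I_D * 'I_D))%type.

Definition valid_slot (N D : nat) (T : 'I_N -> {set 'I_D}) (k : slot N D) : bool :=
  [&& (k.2.1 < k.2.2)%N, k.2.1 \in T k.1 & k.2.2 \in T k.1].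

Definition emit_prob (R : realType) (N D : nat) (T : 'I_N -> {set 'I_D})
    (eps : R) (k : slot N D) : R :=
  if valid_slot T k then
    Num.min 1 ((2 * ln (D%:R)) / eps
               / (minn (doc_count T k.2.1) (doc_count T k.2.2))%:R)
  else 0.

Definition outcome_prob (R : realType) (N D : nat) (T : 'I_N -> {set 'I_D})
    (eps : R) (om : {ffun slot N D -> bool}) : R :=
  \prod_(k : slot N D) (if om k then emit_prob T eps k else 1 - emit_prob T eps k).

Definition expected_shuffle_size (R : realType) (N D : nat)
    (T : 'I_N -> {set 'I_D}) (eps : R) : R :=
  \sum_(om : {ffun slot N D -> bool})
     outcome_prob T eps om * (#|[set k : slot N D | om k]|)%:R.

From mathcomp Require Import all_boot all_order all_algebra.
From mathcomp Require Import reals exp ring.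
Set Implicit Arguments. Unset Strict Implicit. Unset Printing Implicit Defensive.
Import Order.TTheory GRing.Theory Num.Theory.
Local Open Scope ring_scope.

(* By linearity of expectation the shuffle size is the sum of the emission
   probabilities.  With q = 2 log D / eps, the probability of a pair (a, b) is
   at most q / min(#(a), #(b)) <= q / #(a) + q / #(b), so a document t
   contributes at most q |t| (sum of 1/#(w) over w in t) for each of the two
   terms.  Summed over all documents, each word w occurs in #(w) of them with
   weight 1/#(w), so the double sum is at most D and the total is at most
   2 q L D = 4 D L log D / eps. *)

Section BernoulliProduct.
Variables (R : comPzRingType) (I : finType) (p : I -> R).

Lemma bernoulli_marginal (j : I) :
  \sum_(om : {ffun I -> bool})
     (\prod_i (if om i then p i else 1 - p i)) * (om j)%:R = p j.
Proof.
pose f i (b : bool) := (if b then p i else 1 - p i) * (if i == j then b%:R else 1).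
transitivity (\sum_(om : {ffun I -> bool}) \prod_i f i (om i)).
  apply: eq_bigr => om _; rewrite big_split /=; congr (_ * _).
  by rewrite -big_mkcond /= big_pred1_eq.
rewrite -(bigA_distr_bigA f) (bigD1 j) //= [X in _ * X]big1 => [|i].
  by rewrite big_bool /f eqxx mulr1 mulr0 /= addr0 mulr1.
by move=> /negbTE neq_ij; rewrite big_bool /f neq_ij /= !mulr1 addrC subrK.
Qed.

Lemma expected_card_bernoulli :
  \sum_(om : {ffun I -> bool})
     (\prod_i (if om i then p i else 1 - p i)) * #|[set i | om i]|%:R
  = \sum_i p i.
Proof.
have cardE (om : {ffun I -> bool}) : #|[set i | om i]|%:R = \sum_i ((om i)%:R : R).
  by rewrite -sum1_card natr_sum big_mkcond; apply: eq_bigr => i _; rewrite inE; case: (om i).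
under eq_bigr => om _ do rewrite cardE mulr_sumr.
by rewrite exchange_big; apply: eq_bigr => j _; apply: bernoulli_marginal.
Qed.

End BernoulliProduct.

Lemma natr_mulV_le1 (F : numFieldType) (n : nat) : n%:R * (n%:R)^-1 <= 1 :> F.
Proof. by case: n => [|n]; rewrite ?mul0r // mulfV ?pnatr_eq0. Qed.

Lemma invr_minn_le_addr (F : numFieldType) (m n : nat) :
  (minn m n)%:R^-1 <= m%:R^-1 + n%:R^-1 :> F.
Proof.
have inv_ge0 (k : nat) : 0 <= k%:R^-1 :> F by rewrite invr_ge0.
by rewrite /minn; case: ltnP => _; rewrite ?lerDl ?lerDr.
Qed.

Section DocumentCounts.
Variables (F : numFieldType) (N D : nat) (T : 'I_N -> {set 'I_D}).

Lemma sum_inv_doc_count_le :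
  \sum_i \sum_(w in T i) (doc_count T w)%:R^-1 <= D%:R :> F.
Proof.
have -> : D%:R = \sum_(w < D) 1 :> F by rewrite sumr_const card_ord.
rewrite (exchange_big_dep predT) //=; apply: ler_sum => w _.
rewrite sumr_const (_ : #|_| = doc_count T w); last by rewrite /doc_count cardsE.
by rewrite -[_ *+ _]mulr_natl natr_mulV_le1.
Qed.

Lemma sum_pairs_inv_doc_count_le (L : nat) : (forall i, (#|T i| <= L)%N) ->
  \sum_i \sum_(a in T i) \sum_(b in T i) (doc_count T a)%:R^-1
    <= L%:R * D%:R :> F.
Proof.
move=> card_le; apply: le_trans (ler_wpM2l (ler0n _ L) sum_inv_doc_count_le).
rewrite mulr_sumr; apply: ler_sum => i _; rewrite mulr_sumr; apply: ler_sum => a _.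
by rewrite sumr_const -[_ *+ _]mulr_natl ler_wpM2r ?invr_ge0 ?ler_nat.
Qed.

Lemma sum_pairs_inv_doc_counts_le (L : nat) : (forall i, (#|T i| <= L)%N) ->
  \sum_i \sum_(a in T i) \sum_(b in T i)
     ((doc_count T a)%:R^-1 + (doc_count T b)%:R^-1)
    <= 2 * (L%:R * D%:R) :> F.
Proof.
move=> card_le; rewrite mulr2n mulrDl mul1r.
have swap_ab : \sum_i \sum_(a in T i) \sum_(b in T i) (doc_count T b)%:R^-1
    = \sum_i \sum_(a in T i) \sum_(b in T i) (doc_count T a)%:R^-1 :> F.
  by apply: eq_bigr => i _; rewrite exchange_big.
under eq_bigr => i _ do under eq_bigr => a _ do rewrite big_split.
under eq_bigr => i _ do rewrite big_split.
rewrite big_split /= swap_ab.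
by apply: lerD; apply: sum_pairs_inv_doc_count_le.
Qed.

End DocumentCounts.

Section Emission.
Variables (R : realType) (N D : nat) (T : 'I_N -> {set 'I_D}) (eps : R).

Lemma emit_prob_eq0 (i : 'I_N) (a b : 'I_D) :
  ~~ ((a \in T i) && (b \in T i)) -> emit_prob T eps (i, (a, b)) = 0.
Proof.
by rewrite /emit_prob /valid_slot /=; case: (a \in T i) (b \in T i) => [] [];
  rewrite ?andbF.
Qed.

Lemma emit_prob_le (i : 'I_N) (a b : 'I_D) : 0 <= 2 * ln D%:R / eps ->
  emit_prob T eps (i, (a, b))
    <= 2 * ln D%:R / eps * ((doc_count T a)%:R^-1 + (doc_count T b)%:R^-1).
Proof.
move=> q_ge0; rewrite /emit_prob; case: ifP => _ /=.
  by rewrite ge_min (ler_wpM2l q_ge0 (invr_minn_le_addr _ _ _)) orbT.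
by rewrite mulr_ge0 // addr_ge0 // invr_ge0.
Qed.

Lemma sum_emit_prob_le : 0 <= 2 * ln D%:R / eps ->
  \sum_k emit_prob T eps k
    <= 2 * ln D%:R / eps * \sum_i \sum_(a in T i) \sum_(b in T i)
         ((doc_count T a)%:R^-1 + (doc_count T b)%:R^-1).
Proof.
move=> q_ge0.
rewrite -(pair_bigA _ (fun i ab => emit_prob T eps (i, ab))) mulr_sumr.
apply: ler_sum => i _; rewrite -(pair_bigA _ (fun a b => emit_prob T eps (i, (a, b)))).
rewrite -(@big_rmcond _ _ _ _ _ (mem (T i))) /= => [|a aNTi]; last first.
  by rewrite big1 // => b _; rewrite emit_prob_eq0 // (negbTE aNTi).
rewrite mulr_sumr; apply: ler_sum => a _.
rewrite -(@big_rmcond _ _ _ _ _ (mem (T i))) /= => [|b bNTi]; last first.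
  by rewrite emit_prob_eq0 // (negbTE bNTi) andbF.
by rewrite mulr_sumr; apply: ler_sum => b _; apply: emit_prob_le.
Qed.

End Emission.

Theorem theorem8 (R : realType) :
  exists C : R, 0 < C /\
    forall (N D L : nat) (T : 'I_N -> {set 'I_D}) (eps : R),
      (2 <= D)%N ->
      (forall i : 'I_N, (#|T i| <= L)%N) ->
      0 < eps -> eps <= 1 ->
      expected_shuffle_size T eps
        <= C * (D%:R * L%:R * ln (D%:R) / eps).
Proof.
exists 4; split=> // N D L T eps D_ge2 card_le eps_gt0 _.
have q_ge0 : 0 <= 2 * ln (D%:R : R) / eps.
  apply: divr_ge0 (ltW eps_gt0); rewrite mulr_ge0 // ln_ge0 // ler1n.
  exact: leq_trans D_ge2.
rewrite /expected_shuffle_size /outcome_prob expected_card_bernoulli.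
apply: le_trans (sum_emit_prob_le T q_ge0) _.
apply: le_trans (ler_wpM2l q_ge0 (sum_pairs_inv_doc_counts_le R card_le)) _.
by rewrite le_eqVlt; apply/orP; left; apply/eqP; ring.
Qed.
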